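(* Let $L\subseteq\Sigma^*$ be a regular language with syntactic ordered monoid $(M,\le)$, let $G\subseteq M$ be a generating set and $eval:G^*\to M$ the natural evaluation morphism. If one of the following holds, then $L\notin Pol(\mathcal{C}om)(\Sigma)$: (1) there exist $u,v,w_1,w_2\in G^*$ with $u=w_1w_2$, $v$ a shuffle of $w_1$ and $w_2$, $eval(u)$ idempotent and $eval(uvu)\not\le eval(u)$; (2) $M$ is divided by a non-commutative group; (3) $M$ is a $T_q$ monoid for some $q>1$. In particular, if $M$ is a $T_q$ monoid for some $q>1$ or is divided by one of $BA_2^+$, $U^+$ or a non-commutative group, then $L\notin Pol(\mathcal{C}om)(\Sigma)$.
   Context: Syntactic ordered monoid of $L\subseteq\Sigma^*$: write $x\preceq_L y$ if for all $u,v\in\Sigma^*$, $uyv\in L\Rightarrow uxv\in L$; the syntactic monoid $\Sigma^*/\equiv_L$ (with $x\equiv_L y$ iff $x\preceq_L y$ and $y\preceq_L x$) is ordered by $[x]\le[y]$ iff $x\preceq_L y$. $\mathcal{C}om(\Sigma)$ is the set of regular languages over $\Sigma$ whose syntactic monoid is commutative; $Pol(\mathcal{C}om)(\Sigma)$ is the set of finite unions of languages $L_0a_1L_1\cdots a_kL_k$ with $k\ge0$, $a_i\in\Sigma$, $L_i\in\mathcal{C}om(\Sigma)$. $v$ is a shuffle of $w_1,w_2$ if there are $k\ge0$ and words $w_{1,1},\dots,w_{1,k},w_{2,1},\dots,w_{2,k}$ (possibly empty) with $w_1=w_{1,1}\cdots w_{1,k}$, $w_2=w_{2,1}\cdots w_{2,k}$,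 $v=w_{1,1}w_{2,1}\cdots w_{1,k}w_{2,k}$. $M$ is a $T_q$ monoid if there exist idempotents $e,f\in M$ with $(ef)^qe=e$ and $(ef)^re\ne e$ for every positive integer $r$ not divisible by $q$. An ordered monoid $N$ divides $M$ if there is a surjective order-preserving monoid morphism from a submonoid of $M$ (restricted order) onto $N$; groups carry the equality order. $BA_2^+$ is the syntactic ordered monoid of $(ab)^*\subseteq\{a,b\}^*$; $U^+$ is the syntactic ordered monoid of the complement in $\{a,b\}^*$ of $(a\cup b)^*aa(a\cup b)^*$. *)

From HB Require Import structures.
From mathcomp Require Import all_boot all_fingroup.
From Stdlib Require List.

Set Implicit Arguments.
Unset Strict Implicit.
Unset Printing Implicit Defensive.

Definition lang (Sigma : Type) := seq Sigma -> Prop.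

Definition regular (Sigma : finType) (L : lang Sigma) : Prop :=
  exists (Q : finType) (d : Q -> Sigma -> Q) (q0 : Q) (F : pred Q),
    forall w, L w <-> F (foldl d q0 w).

Definition synt_le (Sigma : Type) (L : lang Sigma) (x y : seq Sigma) : Prop :=
  forall u v : seq Sigma, L (u ++ y ++ v) -> L (u ++ x ++ v).

(* An ordered monoid presented as a carrier with a multiplication, a unit and
   a preorder; two elements denote the same monoid element iff eqv holds. *)
Record omon := OMon {
  ocar : Type;
  omul : ocar -> ocar -> ocar;
  oone : ocar;
  ole : ocar -> ocar -> Prop }.

Definition oeqv (M : omon) (x y : ocar M) : Prop := ole x y /\ ole y x.

(* The syntactic ordered monoid of L: words modulo ==_L, ordered by <=_L. *)
Definition synt_omon (Sigma : Type) (L : lang Sigma) : omon :=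
  @OMon (seq Sigma) cat [::] (synt_le L).

Definition group_omon (gT : finGroupType) : omon :=
  @OMon gT (fun x y => (x * y)%g) 1%g (@eq gT).

Definition odivides (N M : omon) : Prop :=
  exists (S : ocar M -> Prop) (phi : ocar M -> ocar N),
    [/\ S (oone M),
        (forall x y, S x -> S y -> S (omul x y)),
        (forall x y, S x -> S y -> ole x y -> ole (phi x) (phi y)),
        oeqv (phi (oone M)) (oone N)
      & (forall x y, S x -> S y -> oeqv (phi (omul x y)) (omul (phi x) (phi y)))]
    /\ (forall n : ocar N, exists2 x, S x & oeqv (phi x) n).

Definition opow (M : omon) (x : ocar M) (n : nat) : ocar M :=
  iter n (omul x) (oone M).

Definition oidem (M : omon) (x : ocar M) : Prop := oeqv (omul x x) x.

Definition Tq_monoid (M : omon) (q : nat) : Prop :=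
  exists e f : ocar M,
    [/\ oidem e, oidem f,
        oeqv (omul (opow (omul e f) q) e) e
      & forall r : nat, 0 < r -> ~~ (q %| r) ->
          ~ oeqv (omul (opow (omul e f) r) e) e].

Definition Com (Sigma : finType) (K : lang Sigma) : Prop :=
  regular K /\ forall x y : seq Sigma, oeqv (M := synt_omon K) (x ++ y) (y ++ x).

(* Marked product L0 a1 L1 ... ak Lk, given L0 and the list [(a1,L1);...]. *)
Fixpoint mprod (Sigma : Type) (L0 : lang Sigma) (s : seq (Sigma * lang Sigma))
  : lang Sigma :=
  match s with
  | [::] => L0
  | (a, L1) :: s' => fun w => exists w0 w',
       w = w0 ++ a :: w' /\ L0 w0 /\ mprod L1 s' w'
  end.

Definition PolCom (Sigma : finType) (L : lang Sigma) : Prop :=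
  exists (n : nat) (L0 : 'I_n -> lang Sigma) (s : 'I_n -> seq (Sigma * lang Sigma)),
    (forall i, Com (L0 i) /\ List.Forall (fun p => Com p.2) (s i)) /\
    (forall w, L w <-> exists i, mprod (L0 i) (s i) w).

Definition shuffle (T : Type) (v w1 w2 : seq T) : Prop :=
  exists xs ys : seq (seq T),
    [/\ size xs = size ys, w1 = flatten xs, w2 = flatten ys
      & v = flatten (map (fun p => p.1 ++ p.2) (zip xs ys))].

(* Languages over {a,b}, encoded as bool with a = true, b = false. *)
Definition lang_abstar : lang bool :=
  fun w => exists n, w = flatten (nseq n [:: true; false]).
Definition lang_no_aa : lang bool :=
  fun w => ~ exists x y, w = x ++ [:: true; true] ++ y.

Definition BA2plus : omon := synt_omon lang_abstar.
Definition Uplus : omon := synt_omon lang_no_aa.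

(* The key property (Lemma PolCom_idem_perm_le): if L is a finite union of
   marked products L0 a1 L1 ... ak Lk of languages with commutative syntactic
   monoids, x is idempotent in the syntactic monoid of L and y is a
   permutation of x, then x y x <= x.  Indeed x ~ x^N with N larger than the
   number of markers, so in any factorisation of u x^N v along a marked
   product one copy of x avoids every marker; it lies inside a commutative,
   hence permutation-closed, factor and may be replaced by y.

   All three criteria follow from this property.  (1) A shuffle v of w1, w2
   is a permutation of u = w1 w2.  (2), (3) For two words z1, z2, a suitable
   idempotent power x = (z1 z2)^m (regularity of L gives one with m a
   multiple of any d > 0) and its permutation (z2 z1)(z1 z2)^(m-1) give
   x (z2 z1)(z1 z2)^(m-1) x <= x.  Pushed through a division onto a group
   (with d the order of ab) it forces ab = ba; pushed onto BA2+ or U+ it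
   contradicts the explicit languages (ab)^* and "no factor aa".  For a T_q
   pair e, f, the property applied to x = (ef)^q e ~ e and its permutation
   f^q e^(q+1) gives efe <= e, which collapses the chain (ef)^r e to
   efe ~ e, contradicting q > 1. *)

From HB Require Import structures.
From mathcomp Require Import all_boot all_fingroup cyclic zify.
From Stdlib Require Import Lia.
From Stdlib Require List.

Set Implicit Arguments.
Unset Strict Implicit.
Unset Printing Implicit Defensive.

(* [wpow z n] is the word z^n; it is definitionally [opow z n] computed in the
   syntactic monoid, whose product is concatenation. *)
Definition wpow (T : Type) (z : seq T) (n : nat) : seq T := iter n (cat z) [::].

Lemma wpowS (T : Type) (z : seq T) n : wpow z n.+1 = z ++ wpow z n.
Proof. by []. Qed.

Lemma wpowD (T : Type) (z : seq T) a b : wpow z (a + b) = wpow z a ++ wpow z b.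
Proof. by elim: a => // a IH; rewrite addSn !wpowS IH catA. Qed.

Lemma wpowSr (T : Type) (z : seq T) n : wpow z n.+1 = wpow z n ++ z.
Proof. by rewrite -addn1 wpowD /= cats0. Qed.

Lemma count_wpow (T : eqType) (a : pred T) z n :
  count a (wpow z n) = n * count a z.
Proof. by elim: n => // n IH; rewrite wpowS count_cat IH mulSn. Qed.

Lemma submonoid_wpow (T : Type) (S : seq T -> Prop) z n : S [::] ->
  (forall x y, S x -> S y -> S (x ++ y)) -> S z -> S (wpow z n).
Proof. by move=> S1 Sm Sz; elim: n => // n IH; rewrite wpowS; apply: Sm. Qed.

Lemma cat_marker_split (T : Type) (A B w0 w' : seq T) c :
  w0 ++ c :: w' = A ++ B ->
  (exists2 z, w0 = A ++ z & B = z ++ c :: w') \/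
  (exists2 p, A = w0 ++ c :: p & w' = p ++ B).
Proof.
elim: A w0 => [|a A IH] [|b w0] /= E; first by left; exists [::].
- by left; exists (b :: w0).
- by case: E => -> ->; right; exists A.
case: E => <- /IH [[z -> ->]|[p -> ->]]; first by left; exists z.
by right; exists p.
Qed.

Section SyntacticPreorder.
Variables (Sigma : Type) (L : lang Sigma).
Local Notation le := (synt_le L).
Local Notation eqv := (oeqv (M := synt_omon L)).

Lemma synt_le_refl x : le x x. Proof. by []. Qed.

Lemma synt_le_trans x y z : le x y -> le y z -> le x z.
Proof. by move=> Hxy Hyz u v H; apply: Hxy; apply: Hyz. Qed.

Lemma synt_le_cat a b c d : le a b -> le c d -> le (a ++ c) (b ++ d).
Proof.
move=> Hab Hcd u v H.
have := Hcd (u ++ a) v; rewrite -!catA; apply.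
by apply: Hab; rewrite -catA in H.
Qed.

Lemma synt_le_mem x y : le x y -> L y -> L x.
Proof. by move=> /(_ [::] [::]); rewrite /= !cats0. Qed.

Lemma synt_eqv_refl x : eqv x x. Proof. by split. Qed.

Lemma synt_eqv_sym x y : eqv x y -> eqv y x. Proof. by case. Qed.

Lemma synt_eqv_trans x y z : eqv x y -> eqv y z -> eqv x z.
Proof.
by move=> [Hxy Hyx] [Hyz Hzy]; split; [apply: synt_le_trans Hyz|apply: synt_le_trans Hyx].
Qed.

Lemma synt_eqv_cat a b c d : eqv a b -> eqv c d -> eqv (a ++ c) (b ++ d).
Proof. by move=> [Hab Hba] [Hcd Hdc]; split; apply: synt_le_cat. Qed.

Lemma synt_idem_wpow x n : eqv (x ++ x) x -> eqv (wpow x n.+1) x.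
Proof.
move=> Hx; elim: n => [|n IH]; first by rewrite /= cats0; split.
by rewrite wpowS; apply: synt_eqv_trans (synt_eqv_cat (synt_eqv_refl x) IH) Hx.
Qed.

End SyntacticPreorder.

Definition perm_stable (T : eqType) (K : lang T) : Prop :=
  forall w w', perm_eq w w' -> K w -> K w'.

Lemma comm_synt_perm (T : eqType) (K : lang T) :
  (forall x y : seq T, oeqv (M := synt_omon K) (x ++ y) (y ++ x)) ->
  forall w w', perm_eq w w' -> oeqv (M := synt_omon K) w w'.
Proof.
move=> Hcomm; elim=> [|c w IH] w' Hp.
  have -> : w' = [::] by apply/nilP; rewrite /nilp -(perm_size Hp).
  exact: synt_eqv_refl.
have c_w' : c \in w' by rewrite -(perm_mem Hp) mem_head.
case/splitPr: c_w' Hp => u v Hp.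
have Hw : perm_eq w (u ++ v).
  by rewrite -(perm_cons c) (perm_trans Hp) // -cat1s perm_catCA.
apply: synt_eqv_trans (synt_eqv_cat (synt_eqv_refl [:: c]) (IH _ Hw)) _.
rewrite catA -(cat1s c v) catA; exact: synt_eqv_cat (Hcomm _ _) (synt_eqv_refl v).
Qed.

Lemma Com_perm_stable (Sigma : finType) (K : lang Sigma) : Com K -> perm_stable K.
Proof.
by move=> [_ Hcomm] w w' /(comm_synt_perm Hcomm) [_ Hge]; apply: synt_le_mem.
Qed.

Section RegularLanguages.
Variables (Sigma : finType) (L : lang Sigma).
Hypothesis hL : regular L.
Local Notation eqv := (oeqv (M := synt_omon L)).

(* The syntactic monoid of a regular language is finite: among infinitely
   many words two are syntactically equivalent (pigeonhole on the transition
   functions of a recognising automaton). *)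
Lemma regular_synt_collision (f : nat -> seq Sigma) :
  exists i j, i < j /\ eqv (f i) (f j).
Proof.
case: hL => Q [d [q0 [F HF]]].
pose trans w : {ffun Q -> Q} := [ffun q => foldl d q w].
have trans_le a b : trans a = trans b -> synt_le L a b.
  move=> Eab u v /HF Hb; apply/HF; move: Hb; rewrite !foldl_cat.
  by have := congr1 (fun t : {ffun Q -> Q} => t (foldl d q0 u)) Eab; rewrite !ffunE => ->.
pose tr_f (i : 'I_#|{ffun Q -> Q}|.+1) := trans (f i).
have /injectivePn [i [j Hij Eij]] : ~~ injectiveb tr_f.
  by apply/injectiveP => /leq_card; rewrite card_ord ltnn.
case: (ltngtP i j) => [lt_ij|lt_ji|/val_inj eq_ij]; last by rewrite eq_ij eqxx in Hij.
- by exists i, j; split=> //; split; apply: trans_le.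
- by exists j, i; split=> //; split; apply: trans_le.
Qed.

Lemma regular_idem_power (z : seq Sigma) d : 0 < d ->
  exists m, [/\ 0 < m, d %| m & eqv (wpow z m ++ wpow z m) (wpow z m)].
Proof.
move=> d_gt0.
have [i [j [lt_ij Eij]]] := regular_synt_collision (wpow z).
set p := j - i.
have period n : i <= n -> eqv (wpow z (n + p)) (wpow z n).
  move=> le_in; have -> : n + p = j + (n - i) by rewrite /p; lia.
  rewrite -{2}(subnKC le_in) !wpowD.
  exact: synt_eqv_cat (synt_eqv_sym Eij) (synt_eqv_refl _).
have periods t n : i <= n -> eqv (wpow z (n + p * t)) (wpow z n).
  elim: t => [|t IH] le_in; first by rewrite muln0 addn0; split.
  rewrite mulnS addnCA addnC; apply: synt_eqv_trans (period _ _) (IH le_in).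
  exact: leq_trans le_in (leq_addr _ _).
exists (p * (i.+1 * d)); split.
- by rewrite !muln_gt0 subn_gt0 lt_ij d_gt0.
- by rewrite mulnA dvdn_mull.
rewrite -wpowD; apply: periods.
by rewrite /p; nia.
Qed.

End RegularLanguages.

Section MarkedProducts.
Variables (Sigma : finType) (x y : seq Sigma).
Hypothesis perm_xy : perm_eq x y.

(* Pumping through a marked product: if p x^N q lies in a marked product of
   permutation-closed languages with fewer than N markers, then some factor x
   of x^N contains no marker, so it can be replaced by its permutation y. *)
Lemma mprod_pump (s : seq (Sigma * lang Sigma)) L0 p q N :
  perm_stable L0 -> List.Forall (fun r => perm_stable r.2) s -> size s < N ->
  mprod L0 s (p ++ wpow x N ++ q) ->
  exists a b, mprod L0 s (p ++ wpow x a ++ y ++ wpow x b ++ q).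
Proof.
elim: s L0 p N => [|[c L1] s IH] L0 p [|N] // HL0 Hs lt_sN.
  move=> /= Hw; exists 0, N; apply: HL0 Hw.
  by rewrite perm_cat2l /= -catA perm_cat2r.
case=> w0 [w' [Ew [Hw0 Hw']]].
case/List.Forall_cons_iff: Hs => /= HL1 Hs.
have Esplit : w0 ++ c :: w' = (p ++ x) ++ (wpow x N ++ q) by rewrite -Ew -!catA.
case: (cat_marker_split Esplit) => [[z Ew0 Ez]|[p' Epx Ew'']].
- exists 0, N => /=; exists (p ++ y ++ z), w'; split; first by rewrite Ez !catA.
  by split=> //; apply: HL0 Hw0; rewrite Ew0 -catA perm_cat2l perm_cat2r.
- rewrite Ew'' in Hw'.
  have [a [b Hab]] := IH L1 p' N HL1 Hs lt_sN Hw'.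
  exists a.+1, b => /=; exists w0, (p' ++ wpow x a ++ y ++ wpow x b ++ q).
  by split=> //; rewrite -catA (catA p) Epx -catA.
Qed.

Lemma PolCom_idem_perm_le (L : lang Sigma) : PolCom L ->
  oeqv (M := synt_omon L) (x ++ x) x -> synt_le L (x ++ y ++ x) x.
Proof.
move=> [n [L0 [s [HCom HL]]]] idem_x u v Hx.
set K := \max_(i < n) size (s i).
have : L ((u ++ x) ++ wpow x K.+1 ++ (x ++ v)).
  have [Hle _] := synt_idem_wpow K.+2 idem_x.
  by move: (Hle u v Hx); rewrite wpowS wpowSr -!catA.
case/HL=> i Hi.
have [HL0 Hs] := HCom i.
have lt_sK : size (s i) < K.+1.
  by rewrite ltnS; apply: (leq_bigmax_cond (F := fun i => size (s i))).
have Hs' : List.Forall (fun r => perm_stable r.2) (s i).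
  by apply: List.Forall_impl Hs => r; apply: Com_perm_stable.
have [a [b Hab]] := mprod_pump (Com_perm_stable HL0) Hs' lt_sK Hi.
have : L (u ++ wpow x a.+1 ++ y ++ wpow x b.+1 ++ v).
  by apply/HL; exists i; rewrite wpowS wpowSr -!catA in Hab *.
have [_ Ha] := synt_idem_wpow a idem_x.
have [_ Hb] := synt_idem_wpow b idem_x.
have Hle := synt_le_cat Ha (synt_le_cat (@synt_le_refl _ L y) Hb).
by move=> Hw; apply: Hle; rewrite -2!catA.
Qed.

End MarkedProducts.

Lemma PolCom_power_le (Sigma : finType) (L : lang Sigma) (z1 z2 : seq Sigma) d :
  regular L -> PolCom L -> 0 < d ->
  exists m, [/\ 0 < m, d %| m &
    synt_le L (wpow (z1 ++ z2) m ++ ((z2 ++ z1) ++ wpow (z1 ++ z2) m.-1)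
                 ++ wpow (z1 ++ z2) m)
              (wpow (z1 ++ z2) m)].
Proof.
move=> hL HP d_gt0.
have [m [m_gt0 dvd_dm idem]] := regular_idem_power hL (z1 ++ z2) d_gt0.
exists m; split=> //; apply: PolCom_idem_perm_le HP idem.
by case: m m_gt0 {dvd_dm} => // m _; rewrite wpowS perm_cat2r perm_catC.
Qed.

Section TqChains.
Variables (Sigma : finType) (L : lang Sigma) (e f : seq Sigma).
Local Notation le := (synt_le L).
Local Notation eqv := (oeqv (M := synt_omon L)).
Hypothesis idem_e : eqv (e ++ e) e.

Definition ef_chain (r : nat) : seq Sigma := wpow (e ++ f) r ++ e.

Lemma ef_chain_idem_left r : eqv (e ++ ef_chain r) (ef_chain r).
Proof.
case: r => [|r]; first exact: idem_e.
rewrite /ef_chain wpowS -!catA catA.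
exact: synt_eqv_cat idem_e (synt_eqv_refl _).
Qed.

Lemma ef_chain_add a b : eqv (ef_chain a ++ ef_chain b) (ef_chain (a + b)).
Proof.
rewrite {1}/ef_chain -catA.
apply: synt_eqv_trans (synt_eqv_cat (synt_eqv_refl _) (ef_chain_idem_left b)) _.
by rewrite /ef_chain wpowD catA; split.
Qed.

Lemma ef_chain_le_e : le (ef_chain 1) e -> forall k, le (ef_chain k) e.
Proof.
move=> le_1 k; elim: k => [|k IH]; first exact: synt_le_refl.
have [_ Hk1] := ef_chain_add 1 k.
apply: synt_le_trans Hk1 _; apply: synt_le_trans (synt_le_cat le_1 IH) _.
exact: proj1 idem_e.
Qed.

(* In Pol(Com): if f is idempotent and (ef)^(q+1) e = e then efe <= e, since
   x = (ef)^(q+1) e is idempotent, f^(q+1) e^(q+2) is a permutation of x,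
   and x f^(q+1) e^(q+2) x = e f e. *)
Lemma PolCom_ef_chain_le q : PolCom L -> eqv (f ++ f) f ->
  eqv (ef_chain q.+1) e -> le (ef_chain 1) e.
Proof.
move=> HP idem_f Hq.
have idem_x : eqv (ef_chain q.+1 ++ ef_chain q.+1) (ef_chain q.+1).
  exact: synt_eqv_trans (synt_eqv_cat Hq Hq) (synt_eqv_trans idem_e (synt_eqv_sym Hq)).
have perm_x : perm_eq (ef_chain q.+1) (wpow f q.+1 ++ wpow e q.+2).
  apply/seq.permP => c; rewrite /ef_chain !count_cat !count_wpow count_cat; lia.
have le_xyx := PolCom_idem_perm_le perm_x HP idem_x.
have fe_eqv : eqv (wpow f q.+1 ++ wpow e q.+2) (f ++ e).
  exact: synt_eqv_cat (synt_idem_wpow q idem_f) (synt_idem_wpow q.+1 idem_e).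
have [_ Hxyx] := synt_eqv_cat Hq (synt_eqv_cat fe_eqv Hq).
apply: synt_le_trans _ (synt_le_trans Hxyx (synt_le_trans le_xyx (proj1 Hq))).
rewrite /ef_chain /= cats0 -!catA.
exact: synt_le_cat (@synt_le_refl _ L e) (synt_le_cat (@synt_le_refl _ L f) (proj2 idem_e)).
Qed.

End TqChains.

(* A T_q monoid with q > 1 is not the syntactic monoid of a Pol(Com) language:
   by the above, (ef)^q e = e forces efe = e, i.e. the exponent 1 already
   works, which q does not divide. *)
Lemma Tq_not_PolCom (Sigma : finType) (L : lang Sigma) q :
  1 < q -> Tq_monoid (synt_omon L) q -> ~ PolCom L.
Proof.
move=> lt1q [e [f [idem_e idem_f Hq Hnot]]] HP.
case: q lt1q Hq Hnot => // q lt1q Hq Hnot.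
have le_1 := PolCom_ef_chain_le idem_e HP idem_f Hq.
apply: (Hnot 1) => //; first by rewrite dvdn1 eqSS -lt0n.
change (oeqv (M := synt_omon L) (ef_chain e f 1) e); split=> //.
have [_ split_q] := ef_chain_add f idem_e 1 q.
have [merge_e _] := ef_chain_add f idem_e 1 0.
apply: synt_le_trans (proj2 Hq) (synt_le_trans split_q _).
apply: (synt_le_trans _ merge_e).
exact: synt_le_cat (@synt_le_refl _ L _) (ef_chain_le_e idem_e le_1 q).
Qed.

Definition preordered_monoid (N : omon) : Prop :=
  [/\ forall x : ocar N, ole x x,
      forall x y z : ocar N, ole x y -> ole y z -> ole x z
    & forall a b c d : ocar N, ole a b -> ole c d -> ole (omul a c) (omul b d)].

Lemma synt_preordered (T : Type) (K : lang T) : preordered_monoid (synt_omon K).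
Proof. by split; [exact: synt_le_refl|exact: synt_le_trans|exact: synt_le_cat]. Qed.

Lemma group_preordered (gT : finGroupType) : preordered_monoid (group_omon gT).
Proof. by split=> //= [x y z -> ->|a b c d -> ->]. Qed.

Section Divisions.
Variables (Sigma : finType) (N : omon).
Hypothesis preN : preordered_monoid N.

Lemma oeqv_trans (x y z : ocar N) : oeqv x y -> oeqv y z -> oeqv x z.
Proof.
case: preN => _ le_tr _ [Hxy Hyx] [Hyz Hzy].
by split; [apply: le_tr Hyz|apply: le_tr Hyx].
Qed.

Lemma omul_oeqv (a b c d : ocar N) :
  oeqv a b -> oeqv c d -> oeqv (omul a c) (omul b d).
Proof. by case: preN => _ _ mono [Hab Hba] [Hcd Hdc]; split; apply: mono. Qed.

Lemma ole_oeqv (x x' y y' : ocar N) :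
  oeqv x x' -> oeqv y y' -> ole x y -> ole x' y'.
Proof.
case: preN => _ le_tr _ [_ Hx'x] [Hyy' _] Hxy.
exact: (le_tr _ _ _ Hx'x (le_tr _ _ _ Hxy Hyy')).
Qed.

Lemma opow_oeqv (x y : ocar N) n : oeqv x y -> oeqv (opow x n) (opow y n).
Proof.
move=> Hxy; elim: n => [|n IH] /=; last exact: omul_oeqv.
by case: preN => refl _ _; split.
Qed.

Variables (S : seq Sigma -> Prop) (phi : seq Sigma -> ocar N).
Hypotheses (S_nil : S [::]) (S_cat : forall x y, S x -> S y -> S (x ++ y)).
Hypothesis phi_nil : oeqv (phi [::]) (oone N).
Hypothesis phi_cat :
  forall x y, S x -> S y -> oeqv (phi (x ++ y)) (omul (phi x) (phi y)).

Lemma phi_wpow z n : S z -> oeqv (phi (wpow z n)) (opow (phi z) n).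
Proof.
move=> Sz; elim: n => [|n IH] //.
rewrite wpowS; apply: oeqv_trans (phi_cat Sz (submonoid_wpow n S_nil S_cat Sz)) _.
by apply: omul_oeqv IH; case: preN => refl _ _; split.
Qed.

End Divisions.

Lemma odivides_power_le (Sigma : finType) (L : lang Sigma) (N : omon) :
  preordered_monoid N -> regular L -> PolCom L -> odivides N (synt_omon L) ->
  forall (a b : ocar N) d, 0 < d ->
  exists m, [/\ 0 < m, d %| m &
    ole (omul (opow (omul a b) m)
              (omul (omul (omul b a) (opow (omul a b) m.-1)) (opow (omul a b) m)))
        (opow (omul a b) m)].
Proof.
move=> preN hL HP [S [phi [[S_nil S_cat phi_le phi_nil phi_cat] phi_onto]]] a b d d_gt0.
have [sa Sa Ea] := phi_onto a.
have [sb Sb Eb] := phi_onto b.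
have [m [m_gt0 dvd_dm Hle]] := PolCom_power_le sa sb hL HP d_gt0.
exists m; split=> //.
have Sab := S_cat _ _ Sa Sb.
have pow_ab n : oeqv (phi (wpow (sa ++ sb) n)) (opow (omul a b) n).
  apply: (oeqv_trans preN (phi_wpow preN S_nil S_cat phi_nil phi_cat n Sab)).
  exact: (opow_oeqv preN n (oeqv_trans preN (phi_cat _ _ Sa Sb) (omul_oeqv preN Ea Eb))).
have SX := submonoid_wpow m S_nil S_cat Sab.
have Sba := S_cat _ _ Sb Sa.
have SW := submonoid_wpow m.-1 S_nil S_cat Sab.
have SY := S_cat _ _ Sba SW.
refine (ole_oeqv preN _ (pow_ab m) (phi_le _ _ (S_cat _ _ SX (S_cat _ _ SY SX)) SX Hle)).
refine (oeqv_trans preN (phi_cat _ _ SX (S_cat _ _ SY SX)) (omul_oeqv preN (pow_ab m) _)).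
refine (oeqv_trans preN (phi_cat _ _ SY SX) (omul_oeqv preN _ (pow_ab m))).
refine (oeqv_trans preN (phi_cat _ _ Sba SW) (omul_oeqv preN _ (pow_ab _))).
exact: (oeqv_trans preN (phi_cat _ _ Sb Sa) (omul_oeqv preN Eb Ea)).
Qed.

Lemma opow_group (gT : finGroupType) (x : gT) n :
  opow (M := group_omon gT) x n = (x ^+ n)%g.
Proof. by elim: n => //= n ->; rewrite expgS. Qed.

(* Groups: with d the order of ab, (ab)^m = 1 and the inequality (an equality
   in a group) reduces to (ba)(ab)^(m-1) = 1, i.e. ba = ab. *)
Lemma noncomm_group_not_PolCom (Sigma : finType) (L : lang Sigma)
  (gT : finGroupType) (a b : gT) : regular L -> (a * b)%g <> (b * a)%g ->
  odivides (group_omon gT) (synt_omon L) -> ~ PolCom L.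
Proof.
move=> hL nab HN HP.
have [m [m_gt0 dvd_m Heq]] :=
  odivides_power_le (group_preordered gT) hL HP HN a b (order_gt0 (a * b)%g).
rewrite !opow_group /= in Heq.
have ab_m : ((a * b) ^+ m = 1)%g by apply/eqP; rewrite -order_dvdn.
rewrite ab_m mul1g mulg1 in Heq.
case: m m_gt0 ab_m {dvd_m} Heq => // m _; rewrite expgSr => ab_m Heq.
by apply: nab; rewrite -[RHS]mulg1 -ab_m !mulgA Heq mul1g.
Qed.

Definition ab_word : seq bool := [:: true; false].

Lemma ab_quotient_not_PolCom (Sigma : finType) (L : lang Sigma) (K : lang bool) :
  regular L -> (forall m, K (wpow ab_word m)) ->
  (forall m k, 0 < m ->
     ~ K (wpow ab_word m ++ (false :: true :: wpow ab_word k) ++ wpow ab_word m)) ->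
  odivides (synt_omon K) (synt_omon L) -> ~ PolCom L.
Proof.
move=> hL Kin Kout HN HP.
have [m [m_gt0 _ Hle]] :=
  odivides_power_le (synt_preordered K) hL HP HN [:: true] [:: false] (ltn0Sn 0).
exact: Kout m m.-1 m_gt0 (synt_le_mem Hle (Kin m)).
Qed.

Lemma wpow_flatten (T : Type) (z : seq T) n : wpow z n = flatten (nseq n z).
Proof. by elim: n => //= n ->. Qed.

Lemma abstar_wpow m : lang_abstar (wpow ab_word m).
Proof. by exists m; rewrite wpow_flatten. Qed.

Lemma abstar_no_b_after m w : ~ lang_abstar (wpow ab_word m ++ false :: w).
Proof.
case=> n; rewrite -wpow_flatten.
by elim: m n => [|m IH] [|n] //= [] /IH.
Qed.

Lemma no_aa_wpow m : lang_no_aa (wpow ab_word m).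
Proof.
elim: m => [|m IH] [x [y E]]; first by case: x E.
case: x E => [|c1 [|c2 x]] //= [_ _ E].
by apply: IH; exists x, y.
Qed.

Lemma no_aa_ba_factor m k : 0 < m ->
  ~ lang_no_aa (wpow ab_word m ++ false :: true :: (wpow ab_word k ++ wpow ab_word m)).
Proof.
case: m => // m _; apply.
have [r Er] : exists r, wpow ab_word k ++ wpow ab_word m.+1 = true :: r.
  by case: k => [|k]; eexists.
by exists (wpow ab_word m.+1 ++ [:: false]), r; rewrite Er -catA.
Qed.

Lemma shuffle_flatten_perm (I : Type) (A : eqType) (g : I -> seq A) v w1 w2 :
  shuffle v w1 w2 -> perm_eq (flatten (map g (w1 ++ w2))) (flatten (map g v)).
Proof.
case=> xs [ys [Hsize -> -> ->]].
elim: xs ys Hsize => [|x xs IH] [|y ys] //= [/IH].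
rewrite !map_cat !flatten_cat => Hperm.
by rewrite -!catA perm_cat2l perm_catCA perm_cat2l.
Qed.

Theorem mainTheorem15 (Sigma : finType) (L : lang Sigma) (hL : regular L)
  (I : Type) (g : I -> seq Sigma)
  (hgen : forall x : seq Sigma, exists s : seq I,
            oeqv (M := synt_omon L) x (flatten (map g s))) :
  let M := synt_omon L in
  let eval := fun s : seq I => flatten (map g s) in
  ( ( (exists u v w1 w2 : seq I,
         [/\ u = w1 ++ w2, shuffle v w1 w2,
             oidem (M := M) (eval u)
           & ~ ole (o := M) (eval (u ++ v ++ u)) (eval u)])
      \/ (exists gT : finGroupType,
            (exists a b : gT, (a * b)%g <> (b * a)%g) /\ odivides (group_omon gT) M)
      \/ (exists q, 1 < q /\ Tq_monoid M q) )
    -> ~ PolCom L )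
  /\
  ( ( (exists q, 1 < q /\ Tq_monoid M q)
      \/ odivides BA2plus M \/ odivides Uplus M
      \/ (exists gT : finGroupType,
            (exists a b : gT, (a * b)%g <> (b * a)%g) /\ odivides (group_omon gT) M) )
    -> ~ PolCom L ).
Proof.
move=> M eval.
have group_case : (exists gT : finGroupType, (exists a b : gT, (a * b)%g <> (b * a)%g)
                     /\ odivides (group_omon gT) M) -> ~ PolCom L.
  by move=> [gT [[a [b nab]] HN]]; apply: noncomm_group_not_PolCom hL nab HN.
have Tq_case : (exists q, 1 < q /\ Tq_monoid M q) -> ~ PolCom L.
  by move=> [q [lt1q HT]]; apply: Tq_not_PolCom lt1q HT.
split.
  case=> [[u [v [w1 [w2 [Eu Hsh idem_u Hnot]]]]] | [/group_case | /Tq_case] //] HP.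
  have perm_uv : perm_eq (eval u) (eval v) by rewrite Eu; apply: shuffle_flatten_perm.
  apply: Hnot; rewrite /eval !map_cat !flatten_cat.
  exact: (PolCom_idem_perm_le perm_uv HP idem_u).
case=> [/Tq_case | [HN | [HN | /group_case]]] //.
- exact: (ab_quotient_not_PolCom hL abstar_wpow (fun m k _ => @abstar_no_b_after m _) HN).
- exact: (ab_quotient_not_PolCom hL no_aa_wpow no_aa_ba_factor HN).
Qed.
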